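(* Let $K$ be a skew field that is finite-dimensional over its center, and take $\sigma=\mathrm{id}$, $\delta=0$, so $K[T;\sigma,\delta]=K[T]$ with $T$ central. Then a skew rational function in $K(T)$ is defined at $a\in K$ if and only if the denominator $P(T)$ of its minimal representation satisfies $P(c)\neq0$ for every $c\in\{bab^{-1}:b\in K^*\}$.
   Context: Here $K^*=K\setminus\{0\}$ acts on $K$ by conjugation ${}^{b}a=bab^{-1}$, and $\Delta(a)=\{bab^{-1}:b\in K^*\}$. For $P\in K[T]$ and $a\in K$, $P(a)$ is the unique element of $K$ with $P(T)-P(a)\in K[T](T-a)$ (i.e. $P(a)=\sum p_ia^i$ for $P=\sum p_iT^i$). For a set $Z$ with a $K^*$-action, the skew product of functions $Z\to K$ is $(f\diamond g)(z)=f({}^{g(z)}z)g(z)$ if $g(z)\neq0$, $0$ otherwise; $f$ is skew invertible if some $g$ satisfies $f\diamond g=g\diamond f=1$. $K(T)$ is the division ring of left fractions of $K[T]$; each $f$ has a unique minimal representation $P(T)^{-1}Q(T)$ with $P$ monic of least degree; $f$ is defined at $a$ if the function $\Delta(a)\to K$, $c\mapsto P(c)$, is skew invertible. *)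

From HB Require Import structures.
From mathcomp Require Import all_boot all_order all_algebra.
Set Implicit Arguments. Unset Strict Implicit. Unset Printing Implicit Defensive.
Import GRing.Theory.
Local Open Scope ring_scope.

Definition skew_field (K : unitRingType) : Prop :=
  forall x : K, x != 0 -> x \is a GRing.unit.

Definition central (K : unitRingType) (z : K) : Prop :=
  forall x : K, z * x = x * z.

Definition findim_over_center (K : unitRingType) : Prop :=
  exists (n : nat) (e : 'I_n -> K),
    forall x : K, exists z : 'I_n -> K,
      (forall i, central (z i)) /\ x = \sum_(i < n) z i * e i.

Definition conj_class (K : unitRingType) (a c : K) : Prop :=
  exists b : K, b != 0 /\ c = b * a * b^-1.

(* skew product of functions Z -> K, with Z acted on by conjugation;
   (f <> g)(z) = f(g(z) z g(z)^-1) g(z) if g(z) <> 0, and 0 otherwise. *)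
Definition skew_prod (K : unitRingType) (f g : K -> K) (z : K) : K :=
  if g z != 0 then f (g z * z * (g z)^-1) * g z else 0.

Definition skew_invertible_on (K : unitRingType) (a : K) (f : K -> K) : Prop :=
  exists g : K -> K, forall z : K, conj_class a z ->
    skew_prod f g z = 1 /\ skew_prod g f z = 1.

(* Equality of left fractions P^-1 Q = P'^-1 Q' in K(T) (Ore localization of
   K[T], T central): a common left multiple U P = U' P' <> 0 with U Q = U' Q'. *)
Definition lfrac_eq (K : unitRingType) (P Q P' Q' : {poly K}) : Prop :=
  exists U U' : {poly K}, U * P = U' * P' /\ U * P != 0 /\ U * Q = U' * Q'.

Definition minimal_rep (K : unitRingType) (P Q : {poly K}) : Prop :=
  P \is monic /\
  forall P' Q' : {poly K}, P' \is monic -> lfrac_eq P Q P' Q' ->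
    (size P <= size P')%N.

(* f = P^-1 Q (minimal) is defined at a iff c |-> P(c) on Delta(a) is skew
   invertible. P(c) = sum p_i c^i is MathComp's horner evaluation P.[c]. *)
Definition defined_at (K : unitRingType) (P : {poly K}) (a : K) : Prop :=
  skew_invertible_on a (fun c => P.[c]).

From HB Require Import structures.
From mathcomp Require Import all_boot all_order all_algebra.
From mathcomp Require Import boolp.
Set Implicit Arguments.
Unset Strict Implicit.
Unset Printing Implicit Defensive.
Import GRing.Theory.
Local Open Scope ring_scope.

(* For a polynomial P and a point a of a skew field K, put
   L(b) = sum_i p_i b a^i.  Then P(b a b^-1) = L(b) b^-1 for every b <> 0, so
   P vanishes nowhere on the conjugacy class Delta(a) iff L is injective.
   L is additive and linear over the center Z of K.  When K is spanned over Z
   by finitely many elements, L is represented by a square matrix over the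
   commutative ring Z, and the Cayley-Hamilton theorem yields a nontrivial
   relation sum_k c_k L^k = 0 with central coefficients; peeling off the
   lowest nonzero coefficient shows that an injective such L is surjective.
   For bijective L the map z = d a d^-1 |-> L^-1(d) d^-1 is well defined on
   Delta(a) (L commutes with right multiplication by the centralizer of a) and
   is a two-sided skew inverse of c |-> P(c).  The converse direction is
   immediate: a skew invertible function cannot vanish. *)

Section SkewField.
Variable K : unitRingType.
Hypothesis HK : skew_field K.

Lemma skew_unitE (x : K) : (x \is a GRing.unit) = (x != 0).
Proof.
by apply/idP/idP => [Ux|/HK //]; apply: contraTneq Ux => ->; rewrite unitr0.
Qed.

Lemma central_inv (z : K) : central z -> central z^-1.
Proof.
move=> Cz x; have [->|nz] := eqVneq z 0; first by rewrite invr0 mul0r mulr0.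
have Uz := HK nz; apply: (mulrI Uz).
by rewrite !mulrA mulrV // mul1r Cz -mulrA mulrV // mulr1.
Qed.

End SkewField.

Section Conjugation.
Variable K : unitRingType.
Implicit Types u v y a : K.

Lemma conjrX u y i : u \is a GRing.unit ->
  (u * y * u^-1) ^+ i = u * y ^+ i * u^-1.
Proof.
move=> Uu; elim: i => [|i IH]; first by rewrite !expr0 mulr1 mulrV.
by rewrite exprS IH !mulrA divrK // exprS !mulrA.
Qed.

Lemma conjrM u v y : u \is a GRing.unit -> v \is a GRing.unit ->
  u * (v * y * v^-1) * u^-1 = (u * v) * y * (u * v)^-1.
Proof. by move=> Uu Uv; rewrite invrM // !mulrA. Qed.

Lemma conjr_eq_comm u v a : u \is a GRing.unit -> v \is a GRing.unit ->
  u * a * u^-1 = v * a * v^-1 -> GRing.comm (v^-1 * u) a.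
Proof.
move=> Uu Uv Euv; rewrite /GRing.comm.
have -> : a * (v^-1 * u) = v^-1 * (v * a * v^-1) * u.
  by rewrite !mulrA mulVr // mul1r.
by rewrite -Euv !mulrA divrK.
Qed.

End Conjugation.

(* The center of K, as a commutative ring: coefficients for matrices. *)
Section Center.
Variable K : unitRingType.

Definition centralb : pred K := fun z => `[< central z >].

Lemma centralb_subring : subring_closed centralb.
Proof.
split.
- by apply/asboolP => x; rewrite mul1r mulr1.
- move=> x y /asboolP Cx /asboolP Cy; apply/asboolP => z.
  by rewrite mulrBl mulrBr Cx Cy.
- move=> x y /asboolP Cx /asboolP Cy; apply/asboolP => z.
  by rewrite -mulrA Cy mulrA Cx mulrA.
Qed.

HB.instance Definition _ :=
  GRing.isSubringClosed.Build K centralb centralb_subring.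

Record center_ring := CenterElt { cval :> K; cvalP : centralb cval }.

HB.instance Definition _ := [isSub for cval].
HB.instance Definition _ := [Choice of center_ring by <:].
HB.instance Definition _ := [SubChoice_isSubNzRing of center_ring by <:].

Lemma center_mulC : commutative (@GRing.mul center_ring).
Proof. by move=> x y; apply: val_inj => /=; move/asboolP: (cvalP x) => ->. Qed.

HB.instance Definition _ :=
  GRing.PzRing_hasCommutativeMul.Build center_ring center_mulC.

Lemma cval_central (x : center_ring) : central (cval x).
Proof. exact/asboolP/(cvalP x). Qed.

Lemma cval_sum (I : Type) (r : seq I) (F : I -> center_ring) :
  cval (\sum_(i <- r) F i) = \sum_(i <- r) cval (F i).
Proof. exact: (big_morph cval (fun _ _ => erefl) erefl). Qed.

End Center.

Definition central_annihilator (K : unitRingType) (L : K -> K) (N : nat)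
    (c : nat -> K) : Prop :=
  [/\ forall k, central (c k),
      exists2 k, (k < N)%N & c k != 0
    & forall x, \sum_(k < N) c k * iter k L x = 0].

Section CentralLinearMaps.
Variable K : unitRingType.
Variable L : K -> K.
Hypothesis LD : forall x y, L (x + y) = L x + L y.
Hypothesis LZ : forall z x, central z -> L (z * x) = z * L x.

Lemma central_linear0 : L 0 = 0.
Proof. by apply: (addrI (L 0)); rewrite -LD !addr0. Qed.

Lemma central_linearN x : L (- x) = - L x.
Proof. by apply/eqP; rewrite -addr_eq0 -LD addNr central_linear0. Qed.

Lemma central_linear_sum (I : Type) (r : seq I) (F : I -> K) :
  L (\sum_(i <- r) F i) = \sum_(i <- r) L (F i).
Proof. exact: (big_morph L LD central_linear0). Qed.

Lemma central_linear_inj : (forall x, L x = 0 -> x = 0) -> injective L.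
Proof.
move=> Lker x y Lxy; apply/eqP; rewrite -subr_eq0; apply/eqP/Lker.
by rewrite LD central_linearN Lxy subrr.
Qed.

(* Over a skew field, an injective central-linear map satisfying a nontrivial
   central relation is surjective: stripping vanishing low coefficients via
   injectivity, c_0 x = -L(...) exhibits every x as a value of L. *)
Lemma annihilated_injective_surjective N c :
  skew_field K -> (forall x, L x = 0 -> x = 0) ->
  central_annihilator L N c -> forall y, exists x, L x = y.
Proof.
move=> HK Lker; elim: N c => [|N IH] c [Cc [k lt_kN ck_nz] Lrel] y.
  by [].
have relation_shift x : \sum_(k < N.+1) c k * iter k L x =
    c 0%N * x + L (\sum_(k < N) c k.+1 * iter k L x).
  rewrite big_ord_recl /= central_linear_sum; congr (_ + _).
  by apply: eq_bigr => i _; rewrite LZ.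
have [c0_eq0|c0_nz] := eqVneq (c 0%N) 0.
  apply: (IH (fun k => c k.+1)); split=> // [|x].
    case: k lt_kN ck_nz => [|k] lt_kN ck_nz; last by exists k.
    by rewrite c0_eq0 eqxx in ck_nz.
  by apply: Lker; move: (Lrel x); rewrite relation_shift c0_eq0 mul0r add0r.
exists ((c 0%N)^-1 * - \sum_(k < N) c k.+1 * iter k L y).
rewrite LZ; last exact: central_inv.
rewrite central_linearN; move: (Lrel y); rewrite relation_shift => /eqP.
by rewrite addr_eq0 => /eqP <-; rewrite mulKr // HK.
Qed.

End CentralLinearMaps.

(* If K is spanned over its center by e_0, ..., e_n, a central-linear map is
   represented on central coordinates by a matrix map_mx over the center, and
   the Cayley-Hamilton theorem for map_mx yields a central relation. *)
Section CayleyHamilton.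
Variables (K : unitRingType) (n : nat) (e : 'I_n.+1 -> K).
Variable L : K -> K.
Hypothesis LD : forall x y, L (x + y) = L x + L y.
Hypothesis LZ : forall z x, central z -> L (z * x) = z * L x.

Definition combination (v : 'rV[center_ring K]_n.+1) : K :=
  \sum_i cval (v 0 i) * e i.

Variable coord : K -> 'rV[center_ring K]_n.+1.
Hypothesis coordK : cancel coord combination.

Definition map_mx : 'M[center_ring K]_n.+1 :=
  \matrix_(i, j) coord (L (e i)) 0 j.

Lemma combinationD v w : combination (v + w) = combination v + combination w.
Proof.
by rewrite -big_split; apply: eq_bigr => i _; rewrite mxE mulrDl.
Qed.

Lemma combination_sum (I : Type) (r : seq I) F :
  combination (\sum_(i <- r) F i) = \sum_(i <- r) combination (F i).
Proof.
apply: (big_morph _ combinationD).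
by rewrite /combination big1 // => i _; rewrite mxE mul0r.
Qed.

Lemma combinationZ c v : combination (c *: v) = cval c * combination v.
Proof.
by rewrite /combination mulr_sumr; apply: eq_bigr => i _; rewrite mxE mulrA.
Qed.

Lemma combination_map_mx v : combination (v *m map_mx) = L (combination v).
Proof.
rewrite /combination (central_linear_sum LD).
under eq_bigr => j _ do rewrite mxE cval_sum mulr_suml.
rewrite exchange_big /=; apply: eq_bigr => i _.
rewrite LZ; last exact: cval_central.
rewrite -(coordK (L (e i))) /combination mulr_sumr; apply: eq_bigr => j _.
by rewrite mxE mulrA.
Qed.

Lemma combination_horner v (p : {poly center_ring K}) :
  combination (v *m horner_mx map_mx p) =
  \sum_(i < size p) cval p`_i * iter i L (combination v).
Proof.
rewrite -{1}(coefK p) poly_def rmorph_sum mulmx_sumr combination_sum.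
apply: eq_bigr => i _.
rewrite -mul_polyC rmorphM /= horner_mx_C rmorphXn /= horner_mx_X -mulmxE.
rewrite mul_scalar_mx -scalemxAr combinationZ; congr (_ * _).
elim: (nat_of_ord i) => [|k IH]; first by rewrite expr0 mulmx1.
by rewrite exprSr -mulmxE mulmxA combination_map_mx IH.
Qed.

Lemma char_poly_annihilator :
  central_annihilator L (size (char_poly map_mx))
    (fun k => cval (char_poly map_mx)`_k).
Proof.
have cp_monic := char_poly_monic map_mx.
split=> [k|| x]; first exact: cval_central.
  exists (size (char_poly map_mx)).-1.
    by rewrite prednK ?ltnSn // size_poly_gt0 monic_neq0.
  by move/monicP: cp_monic; rewrite /lead_coef => ->; rewrite oner_eq0.
by rewrite -(coordK x) -combination_horner Cayley_Hamilton mulmx0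
  /combination big1 // => i _; rewrite mxE mul0r.
Qed.

End CayleyHamilton.

Lemma findim_central_annihilator (K : unitRingType) (L : K -> K) :
  findim_over_center K ->
  (forall x y, L (x + y) = L x + L y) ->
  (forall z x, central z -> L (z * x) = z * L x) ->
  exists N c, central_annihilator L N c.
Proof.
move=> [[|n] [e e_span]] LD LZ.
  have [z [_]] := e_span 1; rewrite big_ord0 => /eqP.
  by rewrite oner_eq0.
have coord_ex x : exists v, combination e v = x.
  have [z [Cz ->]] := e_span x.
  exists (\row_i @CenterElt _ (z i) (introT (asboolP _) (Cz i))).
  by apply: eq_bigr => i _; rewrite mxE.
have [coord coordK] := choice coord_ex.
by do 2!eexists; exact: (char_poly_annihilator LD LZ coordK).
Qed.

(* The twisted evaluation b |-> sum_i p_i b a^i, which computes P on the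
   conjugacy class of a. *)
Section TwistedEvaluation.
Variables (K : unitRingType) (P : {poly K}) (a : K).

Definition twisted_eval (b : K) : K := \sum_(i < size P) P`_i * b * a ^+ i.

Lemma twisted_evalD x y :
  twisted_eval (x + y) = twisted_eval x + twisted_eval y.
Proof.
by rewrite -big_split; apply: eq_bigr => i _; rewrite mulrDr mulrDl.
Qed.

Lemma twisted_evalZ z x :
  central z -> twisted_eval (z * x) = z * twisted_eval x.
Proof.
by move=> Cz; rewrite mulr_sumr; apply: eq_bigr => i _; rewrite !mulrA Cz.
Qed.

Lemma twisted_evalMr b c :
  GRing.comm c a -> twisted_eval (b * c) = twisted_eval b * c.
Proof.
move=> Cca; rewrite mulr_suml; apply: eq_bigr => i _.
by rewrite -!mulrA (commrX i Cca).
Qed.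

Lemma horner_conj b : b \is a GRing.unit ->
  P.[b * a * b^-1] = twisted_eval b * b^-1.
Proof.
move=> Ub; rewrite horner_coef mulr_suml; apply: eq_bigr => i _.
by rewrite conjrX // !mulrA.
Qed.

End TwistedEvaluation.

Section SkewInverse.
Variables (K : unitRingType) (P : {poly K}) (a : K).
Hypothesis HK : skew_field K.
Local Notation L := (twisted_eval P a).
Local Notation f := (fun c => P.[c]).

Hypothesis Lker : forall x, L x = 0 -> x = 0.
Variable Linv : K -> K.
Hypothesis LinvK : cancel Linv L.
Variable conjugator : K -> K.
Hypothesis conjugatorP : forall z, conj_class a z ->
  conjugator z != 0 /\ z = conjugator z * a * (conjugator z)^-1.

Let Linj : injective L.
Proof. exact: central_linear_inj (@twisted_evalD _ P a) Lker. Qed.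

Let Linv_nz d : d != 0 -> Linv d != 0.
Proof.
apply: contraNneq => d0; rewrite -(LinvK d) d0.
exact/eqP/(central_linear0 (@twisted_evalD _ P a)).
Qed.

Definition skew_inv (z : K) : K :=
  Linv (conjugator z) * (conjugator z)^-1.

(* skew_inv does not depend on the chosen conjugator. *)
Lemma skew_inv_conj d : d != 0 ->
  skew_inv (d * a * d^-1) = Linv d * d^-1.
Proof.
move=> d_nz; have Ud := HK d_nz.
have [d'_nz Ed'] := conjugatorP (ex_intro _ d (conj d_nz erefl)).
rewrite /skew_inv; set d' := conjugator _ in d'_nz Ed' *.
have Ud' := HK d'_nz.
have Uc : d'^-1 * d \is a GRing.unit by rewrite unitrMr ?unitrV.
have Linv_d : Linv (d' * (d'^-1 * d)) = Linv d' * (d'^-1 * d).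
  apply: Linj; rewrite LinvK twisted_evalMr ?LinvK //.
  exact: conjr_eq_comm.
by rewrite mulVKr // in Linv_d; rewrite Linv_d !mulrA mulrK.
Qed.

Lemma skew_inv_spec : skew_invertible_on a f.
Proof.
exists skew_inv => z [d [d_nz ->]].
have Ud := HK d_nz; have Ub := HK (Linv_nz d_nz).
have Ld_nz : L d != 0 by apply: contra_neq d_nz => /Lker.
have ULd := HK Ld_nz.
have Linv_L : Linv (L d) = d by apply: Linj; rewrite LinvK.
have g_nz : Linv d / d != 0 by rewrite -skew_unitE // unitrMr ?unitrV.
have f_nz : L d / d != 0 by rewrite -skew_unitE // unitrMr ?unitrV.
rewrite /skew_prod skew_inv_conj // (horner_conj P a Ud) g_nz f_nz.
rewrite !conjrM ?unitrMr ?unitrV // !divrK // (horner_conj P a Ub).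
rewrite skew_inv_conj // LinvK Linv_L.
by split; rewrite mulrA divrK // mulrV.
Qed.

End SkewInverse.

Lemma skew_invertible_nonzero (K : unitRingType) (a : K) (f : K -> K) :
  skew_invertible_on a f -> forall c, conj_class a c -> f c != 0.
Proof.
move=> [g g_inv] c ac; apply: contraTneq isT => fc0.
have [_] := g_inv c ac; rewrite /skew_prod fc0 eqxx => /esym/eqP.
by rewrite oner_eq0.
Qed.

Theorem corollary3p6 (K : unitRingType) (HK : skew_field K)
  (Hfin : findim_over_center K) (P Q : {poly K}) (Hmin : minimal_rep P Q)
  (a : K) :
  defined_at P a <-> (forall c : K, conj_class a c -> P.[c] != 0).
Proof.
split; first exact: skew_invertible_nonzero.
move=> P_nz.
pose L := twisted_eval P a.
have LD := @twisted_evalD K P a; have LZ := @twisted_evalZ K P a.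
have Lker x : L x = 0 -> x = 0.
  move=> Lx0; have [//|x_nz] := eqVneq x 0.
  have := P_nz _ (ex_intro _ x (conj x_nz erefl)).
  by rewrite (horner_conj P a (HK x x_nz)) -/L Lx0 mul0r eqxx.
have [N [c ann]] := findim_central_annihilator Hfin LD LZ.
have L_surj := annihilated_injective_surjective LD LZ HK Lker ann.
have [Linv LinvK] := choice L_surj.
have conj_ex z : exists d, conj_class a z -> d != 0 /\ z = d * a * d^-1.
  by have [[d Hd]|nz] := pselect (conj_class a z); [exists d|exists 0].
have [conjugator conjugatorP] := choice conj_ex.
exact: (skew_inv_spec HK Lker LinvK conjugatorP).
Qed.
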